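(* For positive integers $s$ and $D\ge0$, the polynomial $p_{s,D}(z):=\mathbb{E}_{Y_1,\dots,Y_s}\big[T_{D_s}(z)\,\mathbf{1}\{|D_s|\le D\}\big]$ has degree at most $D$ and all its coefficients have absolute value at most $2^{2D}$.
   Context: $Y_1,\dots,Y_s$ are i.i.d. uniform $\pm1$ random variables and $D_s:=\sum_{i=1}^sY_i$. $T_k$ is the Chebyshev polynomial of the first kind ($T_0=1$, $T_1=z$, $T_{k+1}=2zT_k-T_{k-1}$), extended to negative indices by $T_{-k}=T_k$. *)

From HB Require Import structures.
From mathcomp Require Import all_boot all_order all_algebra.
Set Implicit Arguments. Unset Strict Implicit. Unset Printing Implicit Defensive.
Import Order.TTheory GRing.Theory Num.Theory.
Local Open Scope ring_scope.

Fixpoint cheb (R : nzRingType) (n : nat) : {poly R} :=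
  match n with
  | 0 => 1
  | 1 => 'X
  | (m.+1 as k).+1 => 2%:R *: 'X * cheb R k - cheb R m
  end.

Definition chebZ (R : nzRingType) (k : int) : {poly R} := cheb R `|k|%N.

Definition Dsum (s : nat) (y : {ffun 'I_s -> bool}) : int :=
  \sum_(i < s) (if y i then 1 else -1).

(* p_{s,D}(z) = E[ T_{D_s}(z) 1{|D_s| <= D} ] with Y_i i.i.d. uniform +-1:
   average over all 2^s sign vectors. *)
Definition pSD (R : fieldType) (s D : nat) : {poly R} :=
  (2%:R ^+ s)^-1 *:
    \sum_(y : {ffun 'I_s -> bool})
      (if (`|Dsum y|%N <= D)%N then chebZ R (Dsum y) else 0).

(* The recursion T_{k+2} = 2 X T_{k+1} - T_k raises the degree by one and, if the
   coefficients of T_k are bounded by 4^k, bounds those of T_{k+2} by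
   2 * 4^(k+1) + 4^k <= 4^(k+2).  Every term of p_{s,D} is either 0 or some
   T_{D_s} with |D_s| <= D, so it has degree at most D and coefficients at most
   4^D = 2^(2D); both bounds survive averaging over the 2^s sign vectors. *)
From mathcomp Require Import all_boot all_order all_algebra zify.
Import Order.TTheory GRing.Theory Num.Theory.
Local Open Scope ring_scope.

Lemma chebSS (R : nzRingType) k :
  cheb R k.+2 = 2%:R *: ('X * cheb R k.+1) - cheb R k.
Proof. by rewrite /= scalerAl. Qed.

Lemma size_cheb_le (R : nzRingType) k : (size (cheb R k) <= k.+1)%N.
Proof.
elim/ltn_ind: k => -[|[|k]] IH; first by rewrite size_poly1.
  by rewrite size_polyX.
rewrite chebSS (leq_trans (size_polyD _ _)) // size_polyN geq_max.
apply/andP; split; last by apply: leq_trans (IH k _) _; lia.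
rewrite (leq_trans (size_scale_leq _ _)) // (leq_trans (size_polyMleq _ _)) //.
by rewrite size_polyX add2n ltnS IH.
Qed.

Lemma norm_coef_cheb_le (R : numDomainType) k i :
  `|(cheb R k)`_i| <= (4 ^ k)%:R.
Proof.
elim/ltn_ind: k i => -[|[|k]] IH i.
- by rewrite coefC; case: eqP; rewrite ?normr1 ?normr0.
- by rewrite coefX; case: eqP; rewrite ?normr1 ?normr0 ?ler1n ?ler0n.
have growth : (2 * 4 ^ k.+1 + 4 ^ k)%:R <= (4 ^ k.+2)%:R :> R.
  by rewrite ler_nat !expnS; lia.
rewrite chebSS coefB coefZ coefXM (le_trans (ler_normB _ _)) //.
apply: le_trans growth; rewrite natrD lerD ?IH //.
case: eqP => _; first by rewrite mulr0 normr0 ler0n.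
by rewrite normrM normr_nat natrM ler_wpM2l ?ler0n ?IH.
Qed.

Lemma size_chebZ_le (R : nzRingType) (k : int) :
  (size (chebZ R k) <= `|k|.+1)%N.
Proof. exact: size_cheb_le. Qed.

Lemma norm_coef_chebZ_le (R : numDomainType) (k : int) i :
  `|(chebZ R k)`_i| <= (4 ^ `|k|)%:R.
Proof. exact: norm_coef_cheb_le. Qed.

Lemma norm_avg_le (R : numFieldType) (T : finType) (x : T -> R) (B : R) :
  0 <= B -> (forall t, `|x t| <= B) -> `|#|T|%:R^-1 * \sum_t x t| <= B.
Proof.
move=> B_ge0 xB; have [->|T_gt0] := posnP #|T|; first by rewrite invr0 mul0r normr0.
have T_pos : 0 < #|T|%:R :> R by rewrite ltr0n.
rewrite normrM ger0_norm ?invr_ge0 ?ler0n // ler_pdivrMl //.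
rewrite (le_trans (ler_norm_sum _ _ _)) // (le_trans (ler_sum _ (fun t _ => xB t))) //.
by rewrite sumr_const mulr_natl.
Qed.

Lemma card_signs s : #|{ffun 'I_s -> bool}| = (2 ^ s)%N.
Proof. by rewrite card_ffun card_bool card_ord. Qed.

Lemma size_pSD_le (R : fieldType) s D : (size (pSD R s D) <= D.+1)%N.
Proof.
rewrite (leq_trans (size_scale_leq _ _)) // (leq_trans (size_sum _ _ _)) //.
apply/bigmax_leqP => y _; case: ifP => [y_le|_]; last by rewrite size_poly0.
exact: leq_trans (size_chebZ_le _ _) _.
Qed.

Lemma norm_coef_pSD_le (R : numFieldType) s D i :
  `|(pSD R s D)`_i| <= (4 ^ D)%:R.
Proof.
rewrite /pSD coefZ coef_sum -natrX -card_signs.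
apply: norm_avg_le => [|y]; first exact: ler0n.
case: ifP => [y_le|_]; last by rewrite coef0 normr0 ler0n.
by rewrite (le_trans (norm_coef_chebZ_le _ _ _)) // ler_nat leq_pexp2l.
Qed.

Theorem corollary1 (R : realFieldType) (s D : nat) (hs : (0 < s)%N) :
  (size (pSD R s D) <= D.+1)%N /\
  (forall i : nat, `|(pSD R s D)`_i| <= 2%:R ^+ (2 * D)).
Proof.
split=> [|i]; first exact: size_pSD_le.
by rewrite -natrX expnM; exact: norm_coef_pSD_le.
Qed.
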